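(* Let $\varepsilon=4\cdot(0.33)^3$. Then $$\varepsilon\, n^{-4}\cdot \max_{S\in\mathcal{S}_{2n}}F(S)\ \le\ \max_{\omega\in\mathbb{R}^{2n},\|\omega\|_2=1}\ \min_{\pi\in\Gamma_n}\sum_{i,j}\pi_{i,j}(M_{i,j}^{\top}\omega)^2\ \le\ \max_{S\in\mathcal{S}_{2n}}F(S).$$
   Context: Setting: $\mathcal{B}\subseteq\mathbb{R}^d$, $K$ a symmetric positive definite kernel on $\mathcal{B}$, points $x_1,\dots,x_n,y_1,\dots,y_n\in\mathcal{B}$. $G=\begin{pmatrix}K(x^n,x^n)&-K(x^n,y^n)\\-K(y^n,x^n)&K(y^n,y^n)\end{pmatrix}$ (with $K(x^n,y^n)=(K(x_i,y_j))_{i,j}$ etc.) is assumed positive definite, $G^{-1}=UU^{\top}$ is its Cholesky decomposition; $M'_{i,j}\in\mathbb{R}^{2n}$ has first $n$ entries $(K(x_i,x_l)-K(y_j,x_l))_{l\in[n]}$ and last $n$ entries $(K(y_j,y_l)-K(x_i,y_l))_{l\in[n]}$; $M_{i,j}=U^{\top}M'_{i,j}$. $\Gamma_n=\{\pi\in\mathbb{R}_+^{n\times n}:$ all row and column sums $1/n\}$, $\langle A,B\rangle=\mathrm{Trace}(A^{\top}B)$, $F(S)=\min_{\pi\in\Gamma_n}\sum_{i,j}\pi_{i,j}\langle M_{i,j}M_{i,j}^{\top},S\rangle$, $\mathcal{S}_{2n}=\{S\in\mathbb{S}^{2n}_+:\mathrm{Trace}(S)=1\}$. The middle quantity equals $\mathcal{KMS}_2(\widehat\mu_n,\widehat\nu_n)^2$,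 where $\widehat\mu_n=\frac1n\sum_i\delta_{x_i}$, $\widehat\nu_n=\frac1n\sum_i\delta_{y_i}$ and $\mathcal{KMS}_2(\mu,\nu)=\sup_{f\in\mathcal{H},\|f\|_{\mathcal{H}}\le1}W_2(f_{\#}\mu,f_{\#}\nu)$ with $\mathcal{H}$ the RKHS of $K$. *)

From HB Require Import structures.
From mathcomp Require Import all_boot all_order all_algebra.
From mathcomp Require Import classical_sets reals.
Unset Printing Implicit Defensive.
Import Order.TTheory GRing.Theory Num.Theory.
Local Open Scope ring_scope.
Local Open Scope classical_set_scope.

Definition kernel_symmetric {R : realType} {d : nat} (B : set 'rV[R]_d)
  (K : 'rV[R]_d -> 'rV[R]_d -> R) : Prop :=
  forall u v, B u -> B v -> K u v = K v u.

(* positive definite kernel (in the RKHS sense): every Gram matrix on points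
   of B is positive semidefinite *)
Definition kernel_posdef {R : realType} {d : nat} (B : set 'rV[R]_d)
  (K : 'rV[R]_d -> 'rV[R]_d -> R) : Prop :=
  forall (m : nat) (z : 'I_m -> 'rV[R]_d) (c : 'I_m -> R),
    (forall i, B (z i)) -> 0 <= \sum_(i < m) \sum_(j < m) c i * c j * K (z i) (z j).

Definition mx_posdef {R : realType} {m : nat} (A : 'M[R]_m) : Prop :=
  A^T = A /\ forall v : 'cV[R]_m, v != 0 -> 0 < (v^T *m A *m v) 0 0.

Definition mx_psd {R : realType} {m : nat} (A : 'M[R]_m) : Prop :=
  A^T = A /\ forall v : 'cV[R]_m, 0 <= (v^T *m A *m v) 0 0.

Definition cholesky_factor {R : realType} {m : nat} (A U : 'M[R]_m) : Prop :=
  is_trig_mx U /\ (forall i, 0 < U i i) /\ A = U *m U^T.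

Definition Gmx {R : realType} {d n : nat} (K : 'rV[R]_d -> 'rV[R]_d -> R)
  (x y : 'I_n -> 'rV[R]_d) : 'M[R]_(n + n) :=
  block_mx (\matrix_(i, l) K (x i) (x l)) (\matrix_(i, l) - K (x i) (y l))
           (\matrix_(i, l) - K (y i) (x l)) (\matrix_(i, l) K (y i) (y l)).

Definition Mprime {R : realType} {d n : nat} (K : 'rV[R]_d -> 'rV[R]_d -> R)
  (x y : 'I_n -> 'rV[R]_d) (i j : 'I_n) : 'cV[R]_(n + n) :=
  col_mx (\col_l (K (x i) (x l) - K (y j) (x l)))
         (\col_l (K (y j) (y l) - K (x i) (y l))).

Definition Mij {R : realType} {d n : nat} (U : 'M[R]_(n + n))
  (K : 'rV[R]_d -> 'rV[R]_d -> R) (x y : 'I_n -> 'rV[R]_d) (i j : 'I_n)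
  : 'cV[R]_(n + n) := U^T *m Mprime K x y i j.

Definition Gamma_n {R : realType} (n : nat) : set 'M[R]_n :=
  [set pi | (forall i j, 0 <= pi i j) /\
            (forall i, \sum_(j < n) pi i j = n%:R^-1) /\
            (forall j, \sum_(i < n) pi i j = n%:R^-1)].

Definition frob {R : realType} {m : nat} (A B : 'M[R]_m) : R := \tr (A^T *m B).

Definition Fobj {R : realType} {n : nat} (M : 'I_n -> 'I_n -> 'cV[R]_(n + n))
  (S : 'M[R]_(n + n)) : R :=
  inf [set r | exists2 pi, Gamma_n n pi &
        r = \sum_(i < n) \sum_(j < n) pi i j * frob (M i j *m (M i j)^T) S].

Definition spectraplex {R : realType} (m : nat) : set 'M[R]_m :=
  [set S | mx_psd S /\ \tr S = 1].

Definition maxF {R : realType} {n : nat} (M : 'I_n -> 'I_n -> 'cV[R]_(n + n)) : R :=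
  sup [set r | exists2 S, spectraplex (n + n) S & r = Fobj M S].

Definition maxmin_omega {R : realType} {n : nat}
  (M : 'I_n -> 'I_n -> 'cV[R]_(n + n)) : R :=
  sup [set r | exists2 w : 'cV[R]_(n + n), \sum_k w k 0 ^+ 2 = 1 &
        r = inf [set t | exists2 pi, Gamma_n n pi &
                   t = \sum_(i < n) \sum_(j < n) pi i j * ((M i j)^T *m w) 0 0 ^+ 2]].

(* The upper bound holds because a unit vector w gives the rank-one point
   w w^T of the spectraplex, at which F is the inner minimum for w.
   For the lower bound fix S, and let u_k be the N = n^2 vectors M_ij rescaled
   to unit S-seminorm.  A signing s maximising the S-norm of v = sum_k s_k u_k
   cannot be improved by flipping one sign, which forces
   s_k u_k^T S v >= u_k^T S u_k, hence M_k^T S M_k <= (M_k^T S v)^2, while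
   v^T S v <= N^2 by Cauchy-Schwarz.  As 0 <= S and tr S = 1, |S v|^2 <= v^T S v,
   so w = S v / |S v| satisfies M_k^T S M_k <= N^2 (M_k^T w)^2 for all k, and
   minimising over couplings gives F(S) <= n^4 times the inner minimum at w. *)

From HB Require Import structures.
From mathcomp Require Import all_boot all_order all_algebra.
From mathcomp Require Import boolp classical_sets reals.
From mathcomp Require Import ring lra.
Set Implicit Arguments.
Unset Strict Implicit.
Import Order.TTheory GRing.Theory Num.Theory.
Local Open Scope ring_scope.

Section MatrixForm.
Variables (R : comNzRingType) (m : nat) (S : 'M[R]_m).

Definition qform (u w : 'cV[R]_m) : R := (u^T *m S *m w) 0 0.

Lemma qformDr u w1 w2 : qform u (w1 + w2) = qform u w1 + qform u w2.
Proof. by rewrite /qform mulmxDr mxE. Qed.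

Lemma qformZr u a w : qform u (a *: w) = a * qform u w.
Proof. by rewrite /qform -scalemxAr mxE. Qed.

Lemma qformDl u1 u2 w : qform (u1 + u2) w = qform u1 w + qform u2 w.
Proof. by rewrite /qform raddfD /= !mulmxDl mxE. Qed.

Lemma qformZl a u w : qform (a *: u) w = a * qform u w.
Proof. by rewrite /qform linearZ /= -!scalemxAl mxE. Qed.

Lemma qform0r u : qform u 0 = 0.
Proof. by rewrite /qform mulmx0 mxE. Qed.

Lemma qform_sumr (I : finType) u (f : I -> 'cV_m) :
  qform u (\sum_k f k) = \sum_k qform u (f k).
Proof. exact: (big_morph (qform u) (qformDr u) (qform0r u)). Qed.

Lemma qform_mulmx u w : qform u w = (u^T *m (S *m w)) 0 0.
Proof. by rewrite /qform mulmxA. Qed.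

Lemma qform_delta k l : qform (delta_mx k 0) (delta_mx l 0) = S k l.
Proof. by rewrite /qform trmx_delta -rowE -colE !mxE. Qed.

Lemma qform_deltal k w : qform (delta_mx k 0) w = (S *m w) k 0.
Proof. by rewrite qform_mulmx trmx_delta -rowE mxE. Qed.

Hypothesis S_sym : S^T = S.

Lemma qformC u w : qform u w = qform w u.
Proof.
have -> : qform u w = (u^T *m S *m w)^T 0 0 by rewrite mxE.
by rewrite !trmx_mul trmxK S_sym mulmxA.
Qed.

Lemma qform_suml (I : finType) (f : I -> 'cV_m) w :
  qform (\sum_k f k) w = \sum_k qform (f k) w.
Proof. by rewrite qformC qform_sumr; apply: eq_bigr => k _; rewrite qformC. Qed.

End MatrixForm.

Lemma sqr_le_mul_of_quadratic_ge0 (R : realFieldType) (a b c : R) :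
  0 <= c -> (forall t, 0 <= a + 2 * t * b + t ^+ 2 * c) -> b ^+ 2 <= a * c.
Proof.
move=> c_ge0 quad_ge0; have [c_gt0|c_le0] := ltP 0 c.
  have := quad_ge0 (- b / c).
  have -> : a + 2 * (- b / c) * b + (- b / c) ^+ 2 * c = a - b ^+ 2 / c.
    by field; rewrite gt_eqF.
  by rewrite subr_ge0 ler_pdivrMr.
have c0 : c = 0 by apply/eqP; rewrite eq_le c_le0 c_ge0.
rewrite c0 mulr0; have [->|b_neq0] := eqVneq b 0; first by rewrite expr0n.
have := quad_ge0 (- (a + 1) / (2 * b)).
have -> : a + 2 * (- (a + 1) / (2 * b)) * b + (- (a + 1) / (2 * b)) ^+ 2 * c = -1.
  by rewrite c0; field.
by rewrite ler0N1.
Qed.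

Section PsdForm.
Variables (R : realFieldType) (m : nat) (S : 'M[R]_m).
Hypotheses (S_sym : S^T = S) (S_psd : forall v, 0 <= qform S v v).

Lemma qform_CauchySchwarz u w : qform S u w ^+ 2 <= qform S u u * qform S w w.
Proof.
apply: sqr_le_mul_of_quadratic_ge0 => [//|t].
have := S_psd (u + t *: w).
rewrite !(qformDl, qformDr, qformZl, qformZr) (qformC S_sym w u).
by congr (0 <= _); ring.
Qed.

Lemma qform_norm_le1 u w :
  qform S u u <= 1 -> qform S w w <= 1 -> `|qform S u w| <= 1.
Proof.
move=> u_le1 w_le1; rewrite -(ler_pXn2r (isT : (0 < 2)%N)) ?nnegrE //.
rewrite real_normK ?num_real // expr1n.
apply: le_trans (qform_CauchySchwarz u w) _.
by rewrite -[1]mulr1 ler_pM ?S_psd.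
Qed.

Hypothesis S_tr1 : \tr S = 1.

Lemma psd_tr1_diag_le1 k : S k k <= 1.
Proof.
rewrite -S_tr1 /mxtrace (bigD1 k) //= lerDl.
by apply: sumr_ge0 => i _; rewrite -qform_delta S_psd.
Qed.

Lemma psd_tr1_entry_le1 k l : `|S k l| <= 1.
Proof. by rewrite -qform_delta qform_norm_le1 // qform_delta psd_tr1_diag_le1. Qed.

Lemma qform_le_sqr_sum_norm a : qform S a a <= (\sum_k `|a k 0|) ^+ 2.
Proof.
rewrite expr2 mulr_suml /qform mxE; apply: ler_sum => l _.
rewrite mxE mulr_suml mulr_sumr; apply: ler_sum => k _.
rewrite mxE (le_trans (ler_norm _)) // !normrM mulrAC [`|a l 0| * _]mulrC.
by rewrite ler_piMr ?mulr_ge0 ?psd_tr1_entry_le1.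
Qed.

Lemma sqr_norm_mulmx_le_qform v : \sum_i (S *m v) i 0 ^+ 2 <= qform S v v.
Proof.
rewrite -[qform S v v]mul1r -S_tr1 mulr_suml; apply: ler_sum => i _.
rewrite -qform_deltal -qform_delta; exact: qform_CauchySchwarz.
Qed.

End PsdForm.

Section SignedSums.
Variables (R : realFieldType) (m : nat) (S : 'M[R]_m) (I : finType).
Variable u : I -> 'cV[R]_m.
Hypotheses (S_sym : S^T = S) (S_psd : forall v, 0 <= qform S v v).

Definition signed_sum (s : {ffun I -> bool}) : 'cV[R]_m :=
  \sum_k (-1) ^+ s k *: u k.

Definition flip_sign (s : {ffun I -> bool}) j : {ffun I -> bool} :=
  [ffun k => (k == j) (+) s k].

Lemma signed_sum_flip s j :
  signed_sum (flip_sign s j) = signed_sum s - (2 * (-1) ^+ s j) *: u j.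
Proof.
rewrite /signed_sum (bigD1 j) //= [in RHS](bigD1 j) //= ffunE eqxx /= signrN.
rewrite (eq_bigr (fun k => (-1) ^+ s k *: u k)) => [|k /negbTE kj]; last first.
  by rewrite ffunE kj.
by rewrite addrAC -scalerBl; congr (_ *: _ + _); ring.
Qed.

Lemma exists_locally_max_signing : exists s : {ffun I -> bool},
  forall j, qform S (u j) (u j) <= (-1) ^+ s j * qform S (u j) (signed_sum s).
Proof.
pose Q s := qform S (signed_sum s) (signed_sum s).
have [s _ s_max] := @arg_maxP _ _ _ [ffun=> true] predT Q isT.
exists s => j; have := s_max (flip_sign s j) isT.
rewrite /Q signed_sum_flip -scaleNr.
rewrite !(qformDl, qformDr, qformZl, qformZr) (qformC S_sym (signed_sum s)).
have := sqrr_sign R (s j); set sg := (-1) ^+ s j => sg2 /= flip_le.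
have sgsgA : sg * (sg * qform S (u j) (u j)) = qform S (u j) (u j).
  by rewrite mulrA -expr2 sg2 mul1r.
lra.
Qed.

Lemma qform_signed_sum_le s :
  (forall k, qform S (u k) (u k) <= 1) ->
  qform S (signed_sum s) (signed_sum s) <= #|I|%:R ^+ 2.
Proof.
move=> u_le1; have -> : #|I|%:R ^+ 2 = \sum_(k : I) \sum_(j : I) (1 : R).
  by rewrite !sumr_const expr2 mulr_natr.
rewrite /signed_sum qform_sumr; apply: ler_sum => k _.
rewrite qformZr qform_suml // mulr_sumr; apply: ler_sum => j _; rewrite qformZl.
apply: le_trans (ler_norm _) _; rewrite !normrM !normr_sign !mul1r.
exact: qform_norm_le1.
Qed.

End SignedSums.

Lemma exists_unit_cV (R : nzRingType) m :
  (0 < m)%N -> exists w : 'cV[R]_m, \sum_k w k 0 ^+ 2 = 1.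
Proof.
move=> m_gt0; exists (delta_mx (Ordinal m_gt0) 0).
rewrite (bigD1 (Ordinal m_gt0)) //= big1 => [|k /negbTE k_neq].
  by rewrite !mxE !eqxx expr1n addr0.
by rewrite mxE k_neq expr0n.
Qed.

Lemma le_sqr_of_normalized_le (R : rcfType) (a x : R) :
  0 <= a -> (Num.sqrt a)^-1 ^+ 2 * a <= (Num.sqrt a)^-1 * x -> a <= x ^+ 2.
Proof.
move=> a_ge0; have [->|a_neq0] := eqVneq a 0; first by rewrite sqr_ge0.
have r_gt0 : 0 < Num.sqrt a by rewrite sqrtr_gt0 lt_def a_neq0 a_ge0.
rewrite -[a in _ * a](sqr_sqrtr a_ge0) -exprMn mulVf ?gt_eqF // expr1n.
rewrite ler_pdivlMl // mulr1 => r_le_x.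
have x_ge0 : 0 <= x := le_trans (ltW r_gt0) r_le_x.
by rewrite -(sqr_sqrtr a_ge0) ler_sqr ?nnegrE ?sqrtr_ge0.
Qed.

Section UnitDirection.
Variables (R : rcfType) (m : nat) (S : 'M[R]_m) (I : finType).
Variable mm : I -> 'cV[R]_m.
Hypotheses (S_sym : S^T = S) (S_psd : forall v, 0 <= qform S v v).

Lemma exists_dominating_vector : exists2 v : 'cV[R]_m,
  qform S v v <= #|I|%:R ^+ 2 &
  forall j, qform S (mm j) (mm j) <= qform S (mm j) v ^+ 2.
Proof.
(* [Num.sqrt 0 ^-1 = 0], so [u k] vanishes when [mm k] has S-seminorm 0. *)
pose c j := (Num.sqrt (qform S (mm j) (mm j)))^-1.
pose u j := c j *: mm j.
have u_le1 k : qform S (u k) (u k) <= 1.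
  rewrite qformZl qformZr mulrA -expr2 exprVn sqr_sqrtr ?S_psd //.
  by have [->|?] := eqVneq (qform S (mm k) (mm k)) 0; rewrite ?mulr0 ?mulVf.
have [s s_max] := exists_locally_max_signing u S_sym.
exists (signed_sum u s); first exact: qform_signed_sum_le.
move=> j; rewrite -[_ ^+ 2]mul1r -(sqrr_sign R (s j)) -exprMn.
apply: le_sqr_of_normalized_le; first exact: S_psd.
by move: (s_max j); rewrite qformZl qformZr qformZl mulrA -expr2 mulrCA.
Qed.

Hypothesis S_tr1 : \tr S = 1.

Lemma exists_unit_direction : (0 < m)%N -> exists2 w : 'cV[R]_m,
  \sum_k w k 0 ^+ 2 = 1 &
  forall j, qform S (mm j) (mm j) <= #|I|%:R ^+ 2 * ((mm j)^T *m w) 0 0 ^+ 2.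
Proof.
move=> m_gt0; have [v v_le a_le] := exists_dominating_vector.
have D_le : \sum_i (S *m v) i 0 ^+ 2 <= #|I|%:R ^+ 2.
  exact: le_trans (sqr_norm_mulmx_le_qform S_sym S_psd S_tr1 v) v_le.
set D := \sum_i _ in D_le.
have [D0|D_neq0] := eqVneq D 0.
  have [w w_unit] := exists_unit_cV R m_gt0; exists w => // j.
  have Sv0 : S *m v = 0.
    apply/matrixP => i l; rewrite (ord1 l) [RHS]mxE; apply/eqP; rewrite -sqrf_eq0.
    by apply/eqP; move/psumr_eq0P: D0; apply => // k _; exact: sqr_ge0.
  apply: le_trans (a_le j) _.
  by rewrite qform_mulmx Sv0 mulmx0 mxE expr0n mulr_ge0 ?sqr_ge0.
have D_gt0 : 0 < D by rewrite lt_def D_neq0 sumr_ge0 // => i _; exact: sqr_ge0.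
exists ((Num.sqrt D)^-1 *: (S *m v)).
  under eq_bigr => i _ do rewrite mxE exprMn.
  by rewrite -mulr_sumr -/D exprVn (sqr_sqrtr (ltW D_gt0)) mulVf.
move=> j; apply: le_trans (a_le j) _.
rewrite -scalemxAr mxE -qform_mulmx exprMn exprVn (sqr_sqrtr (ltW D_gt0)) mulrA.
apply: (ler_peMl (sqr_ge0 _)).
by rewrite ler_pdivlMr // mul1r.
Qed.

End UnitDirection.

Local Open Scope classical_set_scope.

Section MinCost.
Variables (R : realType) (n : nat).

Definition transport_cost (pi : 'M[R]_n) (c : 'I_n -> 'I_n -> R) : R :=
  \sum_(i < n) \sum_(j < n) pi i j * c i j.

Definition min_cost (c : 'I_n -> 'I_n -> R) : R :=
  inf [set r | exists2 pi, Gamma_n n pi & r = transport_cost pi c].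

Definition uniform_coupling : 'M[R]_n := const_mx (n%:R ^+ 2)^-1.

Lemma uniform_coupling_Gamma : Gamma_n n uniform_coupling.
Proof.
have sum_row (i : 'I_n) : \sum_(j < n) uniform_coupling i j = n%:R^-1.
  have n_neq0 : (n%:R : R) != 0.
    by rewrite pnatr_eq0 -lt0n (leq_ltn_trans _ (ltn_ord i)).
  under eq_bigr => j _ do rewrite mxE.
  by rewrite sumr_const card_ord -mulr_natl; field.
split; [|split] => [i j|i|j]; rewrite ?mxE ?invr_ge0 ?exprn_ge0 ?ler0n //.
by rewrite -(sum_row j); apply: eq_bigr => i _; rewrite !mxE.
Qed.

Lemma nonempty_costs c :
  [set r | exists2 pi, Gamma_n n pi & r = transport_cost pi c] !=set0.
Proof.
exists (transport_cost uniform_coupling c); exists uniform_coupling => //.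
exact: uniform_coupling_Gamma.
Qed.

Variable c : 'I_n -> 'I_n -> R.
Hypothesis c_ge0 : forall i j, 0 <= c i j.

Lemma min_cost_ge0 : 0 <= min_cost c.
Proof.
apply: lb_le_inf; first exact: nonempty_costs.
move=> r [pi [pi_ge0 _] ->]; apply: sumr_ge0 => i _; apply: sumr_ge0 => j _.
exact: mulr_ge0.
Qed.

Lemma min_cost_le pi : Gamma_n n pi -> min_cost c <= transport_cost pi c.
Proof.
move=> pi_Gamma; apply: ge_inf; last by exists pi.
exists 0 => r [pi' [pi'_ge0 _] ->]; apply: sumr_ge0 => i _; apply: sumr_ge0 => j _.
exact: mulr_ge0.
Qed.

Lemma min_cost_le_scale k c' : 0 < k ->
  (forall i j, c i j <= k * c' i j) -> min_cost c <= k * min_cost c'.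
Proof.
move=> k_gt0 c_le; rewrite -ler_pdivrMl //.
apply: lb_le_inf; first exact: nonempty_costs.
move=> r [pi pi_Gamma ->]; rewrite ler_pdivrMl //.
apply: le_trans (min_cost_le pi_Gamma) _; rewrite /transport_cost mulr_sumr.
apply: ler_sum => i _; rewrite mulr_sumr; apply: ler_sum => j _.
by rewrite mulrCA ler_wpM2l //; case: pi_Gamma.
Qed.

End MinCost.
Arguments uniform_coupling {R n}.
Arguments uniform_coupling_Gamma {R n}.

Lemma frob_rank1 (R : realType) m (a : 'cV[R]_m) (S : 'M[R]_m) :
  frob (a *m a^T) S = qform S a a.
Proof.
by rewrite /frob trmx_mul trmxK -mulmxA mxtrace_mulC /mxtrace big_ord1.
Qed.

Lemma qform_rank1 (R : comNzRingType) m (w a : 'cV[R]_m) :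
  qform (w *m w^T) a a = ((a^T *m w) 0 0) ^+ 2.
Proof.
rewrite /qform !mulmxA -mulmxA -[w^T *m a]trmxK trmx_mul trmxK.
by rewrite mxE big_ord1 [_^T 0 0]mxE expr2.
Qed.

Lemma spectraplex_rank1 (R : realType) m (w : 'cV[R]_m) :
  \sum_k w k 0 ^+ 2 = 1 -> spectraplex m (w *m w^T).
Proof.
move=> w_unit; split; first split.
- by rewrite trmx_mul trmxK.
- by move=> v; rewrite -/(qform _ v v) qform_rank1 sqr_ge0.
rewrite mxtrace_mulC /mxtrace big_ord1 mxE -w_unit.
by apply: eq_bigr => k _; rewrite mxE expr2.
Qed.

Section Objective.
Variables (R : realType) (n : nat) (M : 'I_n -> 'I_n -> 'cV[R]_(n + n)).
Hypothesis n_gt0 : (0 < n)%N.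

Lemma FobjE S : Fobj M S = min_cost (fun i j => qform S (M i j) (M i j)).
Proof.
rewrite -[Fobj M S]/(min_cost (fun i j => frob (M i j *m (M i j)^T) S)).
by congr min_cost; apply/funext => i; apply/funext => j; rewrite frob_rank1.
Qed.

Lemma Fobj_rank1 (w : 'cV[R]_(n + n)) :
  Fobj M (w *m w^T) = min_cost (fun i j => ((M i j)^T *m w) 0 0 ^+ 2).
Proof.
rewrite FobjE; congr min_cost.
by apply/funext => i; apply/funext => j; rewrite qform_rank1.
Qed.

Lemma Fobj_ge0 S : spectraplex (n + n) S -> 0 <= Fobj M S.
Proof.
by move=> [[_ S_psd] _]; rewrite FobjE; apply: min_cost_ge0 => i j; apply: S_psd.
Qed.

Lemma Fobj_le_uniform S : spectraplex (n + n) S ->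
  Fobj M S <= transport_cost uniform_coupling (fun i j => (\sum_k `|M i j k 0|) ^+ 2).
Proof.
move=> [[S_sym S_psd] S_tr1]; rewrite FobjE.
apply: le_trans (min_cost_le _ uniform_coupling_Gamma) _ => [i j|]; first exact: S_psd.
apply: ler_sum => i _; apply: ler_sum => j _.
rewrite ler_wpM2l ?mxE ?invr_ge0 ?exprn_ge0 //.
exact: qform_le_sqr_sum_norm.
Qed.

Let F_values := [set r | exists2 S, spectraplex (n + n) S & r = Fobj M S].

Let omega_values := [set r | exists2 w : 'cV[R]_(n + n), \sum_k w k 0 ^+ 2 = 1 &
  r = min_cost (fun i j => ((M i j)^T *m w) 0 0 ^+ 2)].

Lemma omega_values_sub : omega_values `<=` F_values.
Proof.
move=> r [w w_unit ->]; exists (w *m w^T); last by rewrite Fobj_rank1.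
exact: spectraplex_rank1.
Qed.

Lemma omega_values_nonempty : omega_values !=set0.
Proof.
have [w w_unit] := exists_unit_cV R (ltn_addr n n_gt0).
by exists (min_cost (fun i j => ((M i j)^T *m w) 0 0 ^+ 2)), w.
Qed.

Lemma has_sup_F_values : has_sup F_values.
Proof.
have [r omega_r] := omega_values_nonempty.
split; first by exists r; exact: omega_values_sub.
exists (transport_cost uniform_coupling (fun i j => (\sum_k `|M i j k 0|) ^+ 2)).
by move=> _ [S S_spec ->]; exact: Fobj_le_uniform.
Qed.

Lemma has_sup_omega_values : has_sup omega_values.
Proof.
split; first exact: omega_values_nonempty.
have [_ [C C_ub]] := has_sup_F_values.
by exists C => r /omega_values_sub /C_ub.
Qed.

Lemma maxmin_omega_le_maxF : maxmin_omega M <= maxF M.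
Proof.
apply: ge_sup; first exact: omega_values_nonempty.
move=> r /omega_values_sub; apply: sup_upper_bound; exact: has_sup_F_values.
Qed.

Lemma maxF_ge0 : 0 <= maxF M.
Proof.
have [[_ [S S_spec _]] _] := has_sup_F_values.
apply: le_trans (Fobj_ge0 S_spec) _.
by apply: sup_upper_bound; [exact: has_sup_F_values | exists S].
Qed.

Lemma maxF_le_maxmin_omega : maxF M <= n%:R ^+ 4 * maxmin_omega M.
Proof.
apply: ge_sup; first by have [r /omega_values_sub] := omega_values_nonempty; exists r.
move=> _ [S [[S_sym S_psd] S_tr1] ->].
have [w w_unit dom] := exists_unit_direction (fun p : 'I_n * 'I_n => M p.1 p.2)
  S_sym S_psd S_tr1 (ltn_addr n n_gt0).
have card_pairs : #|{: 'I_n * 'I_n}|%:R ^+ 2 = n%:R ^+ 4 :> R.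
  by rewrite card_prod card_ord natrM; ring.
rewrite card_pairs in dom.
rewrite FobjE; apply: le_trans (min_cost_le_scale _ _ (fun i j => dom (i, j))) _.
- by move=> i j; apply: S_psd.
- by rewrite exprn_gt0 // ltr0n.
rewrite ler_wpM2l ?exprn_ge0 ?ler0n //.
by apply: sup_upper_bound; [exact: has_sup_omega_values | exists w].
Qed.

End Objective.

Theorem theorem4p7 (R : realType) (d n : nat) (B : set 'rV[R]_d)
  (K : 'rV[R]_d -> 'rV[R]_d -> R) (x y : 'I_n -> 'rV[R]_d) (U : 'M[R]_(n + n)) :
  (0 < n)%N ->
  kernel_symmetric B K -> kernel_posdef B K ->
  (forall i, B (x i)) -> (forall i, B (y i)) ->
  mx_posdef (Gmx K x y) ->
  cholesky_factor (invmx (Gmx K x y)) U ->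
  let eps : R := 4 * (33 / 100) ^+ 3 in
  eps * n%:R ^- 4 * maxF (Mij U K x y) <= maxmin_omega (Mij U K x y) /\
  maxmin_omega (Mij U K x y) <= maxF (Mij U K x y).
Proof.
move=> n_gt0 _ _ _ _ _ _ eps; set M := Mij U K x y.
split; last exact: maxmin_omega_le_maxF.
have n4_gt0 : 0 < n%:R ^+ 4 :> R by rewrite exprn_gt0 // ltr0n.
have F_ge0 := maxF_ge0 M n_gt0.
apply: le_trans (_ : n%:R ^- 4 * maxF M <= _).
  rewrite -mulrA ler_piMl ?mulr_ge0 ?invr_ge0 ?exprn_ge0 ?ler0n // /eps; lra.
by rewrite ler_pdivrMl // maxF_le_maxmin_omega.
Qed.
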